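(* Let $AS=\langle S,F,B,D,\geq,\delta^0\rangle$ be an agent system specification and $\Delta$ a U-closed set of feasible decision profiles. For every decision profile $\delta\in\Delta$ there is a $\Delta$ joint goal set $\langle G^+,G^-\rangle$ of $AS$ such that $\delta$ is a $\langle G^+,G^-\rangle$ decision.
   Context: Let $S=\{\alpha_1,\ldots,\alpha_n\}$ be a set of agents. Fix pairwise disjoint sets of propositional atoms $A_1,\ldots,A_n$, $A=A_1\cup\cdots\cup A_n$, and a further disjoint set $W$ of atoms. $L_{A_i}$, $L_A$, $L_W$, $L_{AW}$ denote the propositional languages over $A_i$, $A$, $W$, $A\cup W$; $Cn_{AW}$ is classical propositional consequence, and $E\models_{AW}x$ means $x\in Cn_{AW}(E)$ ($E\models_{AW}G$ means this for all $x\in G$). A rule is an ordered pair $x\Rightarrow y$. For $R\subseteq L_{AW}\times L_{AW}$, $T\subseteq L_{AW}$: $R(T)=\{y\mid x\Rightarrow y\in R,x\in T\}$, $E_R(T)=\bigcap\{X\mid T\subseteq X,\ R(Cn_{AW}(X))\subseteq X\}$. An agent system specification $AS=\langle S,F,B,D,\geq,\delta^0\rangle$ consists of, for each agent $i$: finite $F_i\subseteq L_W$, finite belief rules $B_i\subseteq L_{AW}\times L_W$, finite desire rules $D_i\subseteq L_{AW}\times L_{AW}$, a total order $\geq_i$ on $D_i$, finite initial decision $\delta^0_i\subseteq L_A$; $F,B,D,\delta^0$ are the unions. A decision profile is $\delta=\langle\delta_1,\ldots,\delta_n\rangle$ with $\delta^0_i\subseteq\delta_i\subseteq L_{A_i}$;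 $E_B(F\cup\delta)=\bigcup_i E_{B_i}(F_i\cup\delta_i)$; feasible means $E_B(F\cup\delta)$ consistent. $U_i(\delta)=\{x\Rightarrow y\in D_i\mid E_B(F\cup\delta)\models_{AW}x,\ E_B(F\cup\delta)\not\models_{AW}y\}$; $U(\delta)=U(\delta')$ means $U_i(\delta)=U_i(\delta')$ for all $i$. $\Delta$ is U-closed if $\delta\in\Delta$ and $U(\delta)=U(\delta')$ imply $\delta'\in\Delta$. $\delta$ is a $\langle G^+,G^-\rangle$ decision if $E_B(F\cup\delta)\models_{AW}G^+$ and $E_B(F\cup\delta)\not\models_{AW}g$ for all $g\in G^-$. For U-closed $\Delta$ of feasible profiles, $\langle G^+,G^-\rangle$ is a $\Delta$ joint goal set if there is $\delta\in\Delta$ with $G^+=\{y\mid x\Rightarrow y\in D,\ E_B(F\cup\delta)\models_{AW}x\wedge y\}$ and $G^-=\{x\mid x\Rightarrow y\in D,\ E_B(F\cup\delta)\not\models_{AW}x\}$. *)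

From mathcomp Require Import all_boot.
From Stdlib Require List.
Set Implicit Arguments. Unset Strict Implicit. Unset Printing Implicit Defensive.

(** Atoms: a type [Atom] of atoms of A ∪ W, with a labelling
    [own : Atom -> option 'I_n]: [own a = Some i] means a ∈ A_i,
    [own a = None] means a ∈ W.  This makes A_1,...,A_n,W pairwise disjoint. *)

Section Logic.
Variable Atom : Type.

Inductive form : Type :=
| FVar of Atom
| FTop
| FBot
| FNeg of form
| FAnd of form & form
| FOr of form & form
| FImp of form & form.

Fixpoint eval (v : Atom -> bool) (f : form) : bool :=
  match f with
  | FVar a => v a
  | FTop => true
  | FBot => false
  | FNeg g => ~~ eval v g
  | FAnd g h => eval v g && eval v h
  | FOr g h => eval v g || eval v h
  | FImp g h => eval v g ==> eval v h
  end.

Fixpoint atoms_in (P : Atom -> Prop) (f : form) : Prop :=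
  match f with
  | FVar a => P a
  | FTop | FBot => True
  | FNeg g => atoms_in P g
  | FAnd g h | FOr g h | FImp g h => atoms_in P g /\ atoms_in P h
  end.

Definition fset := form -> Prop.

Definition entails (E : fset) (x : form) : Prop :=
  forall v : Atom -> bool, (forall e, E e -> eval v e) -> eval v x.

Definition entails_set (E G : fset) : Prop := forall x, G x -> entails E x.

Definition consistent (E : fset) : Prop := ~ entails E FBot.

Definition rule := (form * form)%type.

Definition ext (R : seq rule) (T : fset) : fset :=
  fun z => forall X : fset,
    (forall t, T t -> X t) ->
    (forall r, List.In r R -> entails X r.1 -> X r.2) ->
    X z.
End Logic.

Arguments FBot {Atom}.
Arguments FTop {Atom}.

Section Agents.
Variables (Atom : Type) (n : nat) (own : Atom -> option 'I_n).

Definition in_LAi (i : 'I_n) (f : form Atom) := atoms_in (fun a => own a = Some i) f.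
Definition in_LA (f : form Atom) := atoms_in (fun a => own a <> None) f.
Definition in_LW (f : form Atom) := atoms_in (fun a => own a = None) f.

Record ASpec := {
  AF : 'I_n -> seq (form Atom);
  AB : 'I_n -> seq (rule Atom);
  AD : 'I_n -> seq (rule Atom);
  Ageq : 'I_n -> rule Atom -> rule Atom -> Prop;
  Ad0 : 'I_n -> seq (form Atom)
}.

Definition wf_ASpec (AS : ASpec) : Prop :=
  (forall i f, List.In f (AF AS i) -> in_LW f) /\
  (forall i r, List.In r (AB AS i) -> in_LW r.2) /\
  (forall i,
     (forall r, List.In r (AD AS i) -> Ageq AS i r r) /\
     (forall r s, List.In r (AD AS i) -> List.In s (AD AS i) ->
        Ageq AS i r s -> Ageq AS i s r -> r = s) /\
     (forall r s t, List.In r (AD AS i) -> List.In s (AD AS i) -> List.In t (AD AS i) ->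
        Ageq AS i r s -> Ageq AS i s t -> Ageq AS i r t) /\
     (forall r s, List.In r (AD AS i) -> List.In s (AD AS i) ->
        Ageq AS i r s \/ Ageq AS i s r)) /\
  (forall i f, List.In f (Ad0 AS i) -> in_LA f).

Definition profile := 'I_n -> fset Atom.

Definition is_profile (AS : ASpec) (d : profile) : Prop :=
  forall i, (forall f, List.In f (Ad0 AS i) -> d i f) /\
            (forall f, d i f -> in_LAi i f).

Definition EB (AS : ASpec) (d : profile) : fset Atom :=
  fun z => exists i : 'I_n,
    ext (AB AS i) (fun f => List.In f (AF AS i) \/ d i f) z.

Definition feasible (AS : ASpec) (d : profile) : Prop := consistent (EB AS d).

Definition Ui (AS : ASpec) (d : profile) (i : 'I_n) (r : rule Atom) : Prop :=
  List.In r (AD AS i) /\ entails (EB AS d) r.1 /\ ~ entails (EB AS d) r.2.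

Definition sameU (AS : ASpec) (d d' : profile) : Prop :=
  forall i r, Ui AS d i r <-> Ui AS d' i r.

Definition U_closed (AS : ASpec) (Delta : profile -> Prop) : Prop :=
  forall d d', Delta d -> is_profile AS d' -> sameU AS d d' -> Delta d'.

Definition inD (AS : ASpec) (r : rule Atom) : Prop := exists i, List.In r (AD AS i).

Definition is_decision (AS : ASpec) (Gp Gm : fset Atom) (d : profile) : Prop :=
  entails_set (EB AS d) Gp /\ (forall g, Gm g -> ~ entails (EB AS d) g).

Definition joint_goal_set (AS : ASpec) (Delta : profile -> Prop) (Gp Gm : fset Atom) : Prop :=
  exists d, Delta d /\
    (forall y, Gp y <-> exists x, inD AS (x, y) /\ entails (EB AS d) (FAnd x y)) /\
    (forall x, Gm x <-> exists y, inD AS (x, y) /\ ~ entails (EB AS d) x).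
End Agents.

(** The witness is the goal set induced by [d] itself: G+ collects the heads
    of desires whose body and head both follow from E_B(F ∪ d), G- the bodies
    that do not follow.  Then [d] is a G+/G- decision because [x ∧ y] entails
    [y], and G- is avoided by construction. *)

From mathcomp Require Import all_boot.

Set Implicit Arguments.

Section InducedGoalSet.
Variables (Atom : Type) (n : nat) (AS : ASpec Atom n).

Lemma entails_andr (E : fset Atom) (x y : form Atom) :
  entails E (FAnd x y) -> entails E y.
Proof. by move=> Exy v Ev; have /andP[] := Exy v Ev. Qed.

Definition induced_pos_goals (d : profile Atom n) : fset Atom :=
  fun y => exists x, inD AS (x, y) /\ entails (EB AS d) (FAnd x y).

Definition induced_neg_goals (d : profile Atom n) : fset Atom :=
  fun x => exists y, inD AS (x, y) /\ ~ entails (EB AS d) x.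

Lemma induced_joint_goal_set (Delta : profile Atom n -> Prop) d :
  Delta d ->
  joint_goal_set AS Delta (induced_pos_goals d) (induced_neg_goals d).
Proof. by move=> Dd; exists d. Qed.

Lemma induced_goal_set_decision d :
  is_decision AS (induced_pos_goals d) (induced_neg_goals d) d.
Proof.
split; first by move=> y [x [_ /entails_andr]].
by move=> x [y [_]].
Qed.

End InducedGoalSet.

Theorem mainTheorem3 (Atom : Type) (n : nat) (own : Atom -> option 'I_n)
    (AS : ASpec Atom n) (Delta : profile Atom n -> Prop) :
  wf_ASpec own AS ->
  U_closed own AS Delta ->
  (forall d, Delta d -> is_profile own AS d /\ feasible AS d) ->
  forall d, Delta d ->
    exists Gp Gm : fset Atom,
      joint_goal_set AS Delta Gp Gm /\ is_decision AS Gp Gm d.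
Proof.
move=> _ _ _ d Dd.
exists (induced_pos_goals AS d), (induced_neg_goals AS d).
split; [exact: induced_joint_goal_set | exact: induced_goal_set_decision].
Qed.
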